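(* Let $(F,[\cdot,\cdot,\cdot],a)$ be a Filippov 3-algebroid over a manifold $M$ and $\nabla$ a covariant derivative on it. For sections $s_1,s_2,s_3,s_4\in\Gamma(F)$ define the operator $R(s_1,s_2,s_3,s_4):\Gamma(F)\to\Gamma(F)$ by $$R(s_1,s_2,s_3,s_4)=[\nabla_{s_1\wedge s_2},\nabla_{s_3\wedge s_4}]-\nabla_{[s_1,s_2,s_3]\wedge s_4}-\nabla_{s_3\wedge[s_1,s_2,s_4]}-[\nabla_{s_1\wedge s_4},\nabla_{s_2\wedge s_3}]+\nabla_{[s_1,s_4,s_2]\wedge s_3}+\nabla_{s_2\wedge[s_1,s_4,s_3]}+[\nabla_{s_2\wedge s_4},\nabla_{s_3\wedge s_1}]-\nabla_{[s_2,s_4,s_3]\wedge s_1}-\nabla_{s_3\wedge[s_2,s_4,s_1]}.$$ Then for every $e\in\Gamma(F)$ and $f\in C^\infty(M)$, $R(s_1,s_2,s_3,s_4)(fe)=f\,R(s_1,s_2,s_3,s_4)(e)$; i.e. $R(s_1,s_2,s_3,s_4)$ is a section of the endomorphism bundle of $F$.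
   Context: A Filippov 3-algebroid is a vector bundle $F\to M$ with a trilinear skew-symmetric bracket $[\cdot,\cdot,\cdot]$ on $\Gamma(F)$ and a bundle map $a:\wedge^2F\to TM$ (anchor) such that: $[a(u_1\wedge u_2),a(v_1\wedge v_2)]_L=a([u_1,u_2,v_1]\wedge v_2)+a(v_1\wedge[u_1,u_2,v_2])$; $[v_1,v_2,fu]=f[v_1,v_2,u]+a(v_1\wedge v_2)(f)u$; and $[u_1,u_2,[v_1,v_2,v_3]]=[[u_1,u_2,v_1],v_2,v_3]+[v_1,[u_1,u_2,v_2],v_3]+[v_1,v_2,[u_1,u_2,v_3]]$. Here $[\cdot,\cdot]_L$ is the Lie bracket of vector fields. A covariant derivative is a map $\nabla:\Gamma(F\wedge F)\times\Gamma(F)\to\Gamma(F)$, written $\nabla_{s_1\wedge s_2}s_3$, additive in both arguments, with $\nabla_{f\,s_1\wedge s_2}=f\nabla_{s_1\wedge s_2}$ and $\nabla_{s_1\wedge s_2}(fs_3)=a(s_1\wedge s_2)(f)s_3+f\nabla_{s_1\wedge s_2}s_3$. $[\nabla_A,\nabla_B]=\nabla_A\nabla_B-\nabla_B\nabla_A$. *)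

(* Algebraic (Lie–Rinehart style) model of a Filippov
   3-algebroid: C^oo(M) is an abstract commutative R-algebra A, vector
   fields are R-linear derivations of A, Γ(F) is an A-module V and
   Γ(∧²F) is an A-module W receiving the wedge map V × V -> W. *)
From HB Require Import structures.
From mathcomp Require Import all_boot all_order all_algebra.
Set Implicit Arguments. Unset Strict Implicit. Unset Printing Implicit Defensive.
Import GRing.Theory.
Local Open Scope ring_scope.

Section Defs.
Variables (R : fieldType) (A : comAlgType R) (V W : lmodType A).

Definition derivation (X : A -> A) : Prop :=
  [/\ forall f g, X (f + g) = X f + X g,
      forall (r : R) f, X (r *: f) = r *: X f
    & forall f g, X (f * g) = f * X g + X f * g].

Definition lieb (X Y : A -> A) : A -> A := fun f => X (Y f) - Y (X f).

Definition is_wedge (wedge : V -> V -> W) : Prop :=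
  [/\ forall u1 u2 v, wedge (u1 + u2) v = wedge u1 v + wedge u2 v,
      forall u v1 v2, wedge u (v1 + v2) = wedge u v1 + wedge u v2,
      forall (f : A) u v, wedge (f *: u) v = f *: wedge u v,
      forall (f : A) u v, wedge u (f *: v) = f *: wedge u v
    & forall u, wedge u u = 0].

Definition is_anchor (a : W -> A -> A) : Prop :=
  [/\ forall w, derivation (a w),
      forall w1 w2 f, a (w1 + w2) f = a w1 f + a w2 f
    & forall (g : A) w f, a (g *: w) f = g * a w f].

Definition is_trilinear_skew (br : V -> V -> V -> V) : Prop :=
  [/\ forall u1 u2 v w, br (u1 + u2) v w = br u1 v w + br u2 v w,
      forall (r : R) u v w, br ((r%:A : A) *: u) v w = (r%:A : A) *: br u v w,
      forall u v w, br u v w = - br v u w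
    & forall u v w, br u v w = - br u w v].

Definition is_Filippov3_algebroid (wedge : V -> V -> W)
    (br : V -> V -> V -> V) (a : W -> A -> A) : Prop :=
  [/\ is_wedge wedge, is_anchor a & is_trilinear_skew br] /\
  [/\ forall u1 u2 v1 v2,
        lieb (a (wedge u1 u2)) (a (wedge v1 v2)) =
        (fun f => a (wedge (br u1 u2 v1) v2) f + a (wedge v1 (br u1 u2 v2)) f),
      forall v1 v2 (f : A) u,
        br v1 v2 (f *: u) = f *: br v1 v2 u + (a (wedge v1 v2) f) *: u
    & forall u1 u2 v1 v2 v3,
        br u1 u2 (br v1 v2 v3) =
        br (br u1 u2 v1) v2 v3 + br v1 (br u1 u2 v2) v3
          + br v1 v2 (br u1 u2 v3)].

Definition is_covariant_derivative (a : W -> A -> A)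
    (nabla : W -> V -> V) : Prop :=
  [/\ forall w1 w2 s, nabla (w1 + w2) s = nabla w1 s + nabla w2 s,
      forall w s1 s2, nabla w (s1 + s2) = nabla w s1 + nabla w s2,
      forall (f : A) w s, nabla (f *: w) s = f *: nabla w s
    & forall w (f : A) s, nabla w (f *: s) = (a w f) *: s + f *: nabla w s].

Definition curvR (wedge : V -> V -> W) (br : V -> V -> V -> V)
    (nabla : W -> V -> V) (s1 s2 s3 s4 : V) (e : V) : V :=
  let N x y := nabla (wedge x y) in
  let C x y z t (e : V) := N x y (N z t e) - N z t (N x y e) in
  C s1 s2 s3 s4 e - N (br s1 s2 s3) s4 e - N s3 (br s1 s2 s4) e
  - C s1 s4 s2 s3 e + N (br s1 s4 s2) s3 e + N s2 (br s1 s4 s3) e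
  + C s2 s4 s3 s1 e - N (br s2 s4 s3) s1 e - N s3 (br s2 s4 s1) e.

End Defs.

(* R(s1,s2,s3,s4) is a signed sum of three terms of the shape
   [∇_{x∧y}, ∇_{z∧t}] - ∇_{[x,y,z]∧t} - ∇_{z∧[x,y,t]}, and each of them is
   tensorial in its argument: by the Leibniz rule the commutator of two
   covariant derivatives fails to be C^oo(M)-linear exactly by
   [a(x∧y), a(z∧t)](f) e, the other two terms fail by
   a([x,y,z]∧t)(f) e + a(z∧[x,y,t])(f) e, and the anchor is a morphism of
   brackets, so the defects cancel. *)

From HB Require Import structures.
From mathcomp Require Import all_boot all_order all_algebra.
Set Implicit Arguments. Unset Strict Implicit. Unset Printing Implicit Defensive.
Import GRing.Theory.
Local Open Scope ring_scope.

Section CovariantDerivative.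
Variables (R : fieldType) (A : comAlgType R) (V W : lmodType A).
Variables (a : W -> A -> A) (nabla : W -> V -> V).
Hypothesis nablaP : is_covariant_derivative a nabla.

Definition nabla_comm (u v : W) (e : V) : V :=
  nabla u (nabla v e) - nabla v (nabla u e).

Lemma nabla_commZ u v (f : A) e :
  nabla_comm u v (f *: e) = lieb (a u) (a v) f *: e + f *: nabla_comm u v e.
Proof.
case: nablaP => _ nablaD _ nablaZ.
rewrite /nabla_comm /lieb !nablaZ !nablaD !nablaZ scalerBl scalerBr.
set X := _ *: e; set Y := _ *: e.
rewrite [_ + (_ *: nabla u e + _)]addrACA opprD addrACA.
rewrite [Y + _]addrC addrKA.
by rewrite [_ *: nabla v e + _]addrC addrKA.
Qed.

End CovariantDerivative.

Section Curvature.
Variables (R : fieldType) (A : comAlgType R) (V W : lmodType A).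
Variables (wedge : V -> V -> W) (br : V -> V -> V -> V).
Variables (a : W -> A -> A) (nabla : W -> V -> V).
Hypothesis algebroidP : is_Filippov3_algebroid wedge br a.
Hypothesis nablaP : is_covariant_derivative a nabla.

Definition curv_term (x y z t e : V) : V :=
  nabla_comm nabla (wedge x y) (wedge z t) e
  - nabla (wedge (br x y z) t) e - nabla (wedge z (br x y t)) e.

Lemma curvR_cyclic s1 s2 s3 s4 e :
  curvR wedge br nabla s1 s2 s3 s4 e =
  curv_term s1 s2 s3 s4 e - curv_term s1 s4 s2 s3 e + curv_term s2 s4 s3 s1 e.
Proof. by rewrite /curvR /curv_term /nabla_comm !opprD !opprK !addrA. Qed.

Lemma curv_termZ x y z t (f : A) e :
  curv_term x y z t (f *: e) = f *: curv_term x y z t e.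
Proof.
have [_ [anchor_lieb _ _]] := algebroidP; have [_ _ _ nablaZ] := nablaP.
rewrite /curv_term (nabla_commZ nablaP) !nablaZ (anchor_lieb x y z t) scalerDl.
set P := _ *: e; set Q := _ *: e.
rewrite -[_ - (Q + _)]addrA -opprD addrACA [P + Q + _]addrC addrKA.
by rewrite !scalerBr opprD addrA.
Qed.

End Curvature.

Theorem mainTheorem6 (R : fieldType) (A : comAlgType R) (V W : lmodType A)
    (wedge : V -> V -> W) (br : V -> V -> V -> V) (a : W -> A -> A)
    (nabla : W -> V -> V) :
  is_Filippov3_algebroid wedge br a ->
  is_covariant_derivative a nabla ->
  forall (s1 s2 s3 s4 e : V) (f : A),
    curvR wedge br nabla s1 s2 s3 s4 (f *: e)
    = f *: curvR wedge br nabla s1 s2 s3 s4 e.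
Proof.
move=> algebroidP nablaP s1 s2 s3 s4 e f.
by rewrite !curvR_cyclic !(curv_termZ algebroidP nablaP) -scalerBr -scalerDr.
Qed.
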